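(* Let $\mathbf p=(p_i)_{i\in\mathbb N}$ and $\mathbf q=(q_i)_{i\in\mathbb N}$ be sequences with $p_i,q_i\ge 0$ for all $i$ and $\sum_i p_i=\sum_i q_i=1$. Let $H(\mathbf p)=-\sum_{i\in\mathbb N}p_i\ln p_i$ (with the convention $0\ln 0=0$), and define $H(\mathbf q)$ similarly. Assume that for some $c\in(0,1/3)$, $$|p_i-q_i|\le c\,q_i\quad\text{for all } i=1,2,\dots.$$ Then $$H(\mathbf p)\le (1+c)H(\mathbf q)+c\ln 3.$$ *)

From HB Require Import structures.
From mathcomp Require Import all_boot all_order all_algebra.
From mathcomp Require Import all_classical all_reals all_analysis.
Set Implicit Arguments. Unset Strict Implicit. Unset Printing Implicit Defensive.
Import Order.TTheory GRing.Theory Num.Theory.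
Local Open Scope ring_scope.
Local Open Scope ereal_scope.

Definition prob_seq (R : realType) (p : nat -> R) : Prop :=
  (forall i, (0 <= p i)%R) /\ \sum_(0 <= i <oo) (p i)%:E = 1%E.

(* Shannon entropy H(p) = - sum_i p_i ln p_i, as an extended real
   (possibly +oo).  The term for p_i = 0 is 0 since 0 * ln 0 = 0. *)
Definition entropy (R : realType) (p : nat -> R) : \bar R :=
  \sum_(0 <= i <oo) (- (p i * ln (p i)))%:E.

From HB Require Import structures.
From mathcomp Require Import all_boot all_order all_algebra.
From mathcomp Require Import all_classical all_reals all_analysis.
From mathcomp Require Import lra.
Set Implicit Arguments. Unset Strict Implicit. Unset Printing Implicit Defensive.
Import Order.TTheory GRing.Theory Num.Theory.
Local Open Scope ring_scope.

(* Termwise, [-p ln p + p <= (1 + c)(-q ln q) + q] whenever [|p - q| <= c q]: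
   write [-p ln p = -p ln q + p (ln q - ln p)], bound the first summand by
   [p <= (1 + c) q] and the second by [q - p] (from [ln x <= x - 1]).
   Summing over [i], the extra [p] and [q] both sum to 1 and cancel, so in fact
   [H(p) <= (1 + c) H(q)]. *)

Lemma prob_seq_le1 (R : realType) (p : nat -> R) i : prob_seq p -> p i <= 1.
Proof.
move=> [p_ge0 sum_p1].
have := @nneseries_lim_ge R (fun j => (p j)%:E) xpredT 0%N i.+1 (fun j _ _ => p_ge0 j).
rewrite sum_p1 big_nat_recr //= -lee_fin; apply: le_trans.
by rewrite leeDr // sume_ge0 // => j _; rewrite lee_fin.
Qed.

Lemma oppr_xlnx_ge0 (R : realType) (x : R) : 0 <= x -> x <= 1 -> 0 <= - (x * ln x).
Proof. by move=> x_ge0 x_le1; rewrite oppr_ge0 mulr_ge0_le0 // ln_le0. Qed.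

Lemma mulr_lnB_le (R : realType) (p q : R) : 0 < p -> 0 < q ->
  p * (ln q - ln p) <= q - p.
Proof.
move=> p_gt0 q_gt0.
have qp_gt0 : 0 < q / p by rewrite divr_gt0.
have : ln q - ln p <= q / p - 1.
  rewrite -ln_div ?posrE //.
  by have := @le_ln1Dx R (q / p - 1); rewrite addrCA subrr addr0; apply; lra.
move/(ler_wpM2l (ltW p_gt0)).
by rewrite !mulrBr mulrCA divff ?mulr1 // gt_eqF.
Qed.

Lemma oppr_xlnx_near_le (R : realType) (p q c : R) :
  0 <= p -> 0 <= q -> q <= 1 -> 0 < c -> `|p - q| <= c * q ->
  - (p * ln p) + p <= (1 + c) * - (q * ln q) + q.
Proof.
move=> p_ge0 q_ge0 q_le1 c_gt0.
rewrite ler_norml => /andP[pq_lb pq_ub].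
have p_le : p <= (1 + c) * q by lra.
have lnq_le0 : ln q <= 0 by rewrite ln_le0.
have [->|p_neq0] := eqVneq p 0.
  have : 0 <= (1 + c) * - (q * ln q) by rewrite mulr_ge0 ?oppr_xlnx_ge0 //; lra.
  rewrite mul0r oppr0 add0r; lra.
have p_gt0 : 0 < p by rewrite lt0r p_neq0.
have q_gt0 : 0 < q.
  by rewrite lt0r q_ge0 andbT; apply: contraTneq p_le => ->; rewrite mulr0 -ltNge.
have gibbs := mulr_lnB_le p_gt0 q_gt0.
have : - (p * ln q) <= (1 + c) * - (q * ln q).
  by rewrite -!mulrN mulrA ler_wpM2r // oppr_ge0.
have : - (p * ln p) = - (p * ln q) + p * (ln q - ln p) by rewrite mulrBr; lra.
lra.
Qed.

Lemma entropy_le_scale (R : realType) (p q : nat -> R) (c : R) :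
  prob_seq p -> prob_seq q -> 0 < c ->
  (forall i, `|p i - q i| <= c * q i) ->
  (entropy p <= (1 + c)%:E * entropy q)%E.
Proof.
move=> hp hq c_gt0 pq_near.
have [p_ge0 sum_p1] := hp; have [q_ge0 sum_q1] := hq.
have p_le1 i := prob_seq_le1 i hp; have q_le1 i := prob_seq_le1 i hq.
have c1_ge0 : 0 <= 1 + c by lra.
have entropy_p1 : (entropy p + 1 =
    \sum_(0 <= i <oo) ((- (p i * ln (p i)))%:E + (p i)%:E))%E.
  by rewrite nneseriesD ?sum_p1 // => i _ _; rewrite lee_fin ?oppr_xlnx_ge0.
have entropy_q1 : ((1 + c)%:E * entropy q + 1 =
    \sum_(0 <= i <oo) (((1 + c) * - (q i * ln (q i)))%:E + (q i)%:E))%E.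
  rewrite nneseriesD; last 2 first.
  - by move=> i _ _; rewrite lee_fin mulr_ge0 ?oppr_xlnx_ge0.
  - by move=> i _ _; rewrite lee_fin.
  rewrite sum_q1 /entropy -nneseriesZl; last by move=> i _; rewrite lee_fin ?oppr_xlnx_ge0.
  by congr (_ + _)%E; apply: eq_eseriesr => i _; rewrite EFinM.
rewrite -(leeD2rE (x := 1%E)) // entropy_p1 entropy_q1.
apply: lee_nneseries => [i _ _|i _].
  by rewrite -EFinD lee_fin addr_ge0 ?oppr_xlnx_ge0.
by rewrite -!EFinD lee_fin (oppr_xlnx_near_le (p_ge0 i) (q_ge0 i) (q_le1 i) c_gt0).
Qed.

Theorem lemma1 (R : realType) (p q : nat -> R) (c : R) :
  prob_seq p -> prob_seq q ->
  0 < c -> c < 1 / 3 ->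
  (forall i, `|p i - q i| <= c * q i) ->
  (entropy p <= (1 + c)%:E * entropy q + (c * ln 3)%:E)%E.
Proof.
move=> hp hq c_gt0 _ pq_near.
apply: (le_trans (entropy_le_scale hp hq c_gt0 pq_near)).
rewrite leeDl // lee_fin; apply: mulr_ge0; first exact: ltW.
by apply: ln_ge0; rewrite ler1n.
Qed.
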